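(* Let $V$ be a finite-dimensional real vector space with a seminorm $|\cdot|_V$, and let $\sigma$ be a zonal representation of $|\cdot|_V$. Then for every set $X$, every $\sigma$-algebra $\Sigma$ on $X$, every vector measure $\mu:\Sigma\to V$ and every $A\in\Sigma$, $$|\mu|_V(A)=\int_{V'}|\langle\eta,\mu\rangle|_{\mathbb{R}}(A)\,d\sigma(\eta).$$
   Context: $V'$ is the set of linear forms $\eta$ on $V$ with finite dual seminorm $|\eta|_{V'}=\sup\{\eta(v):|v|_V\le1\}$. A zonal representation of $|\cdot|_V$ is a locally finite nonnegative Borel measure $\sigma$ on $V'$ such that $\int_{V'}|\eta|_{V'}\,d\sigma(\eta)<\infty$ and $|v|_V=\int_{V'}|\eta(v)|\,d\sigma(\eta)$ for all $v\in V$. A vector measure is a countably additive map $\mu:\Sigma\to V$; total variation: $|\mu|_V(A)=\sup\{\sum_{i=1}^m|\mu(E_i)|_V : E_1,\dots,E_m\in\Sigma \text{ pairwise disjoint subsets of } A\}$. For $\eta\in V'$, $\langle\eta,\mu\rangle$ is the signed measure $E\mapsto\eta(\mu(E))$ and $|\langle\eta,\mu\rangle|_{\mathbb{R}}$ its total variation with respect to the absolute value. *)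

From HB Require Import structures.
From mathcomp Require Import all_boot all_order all_algebra.
From mathcomp Require Import all_classical all_reals all_analysis.
Set Implicit Arguments. Unset Strict Implicit. Unset Printing Implicit Defensive.
Import Order.TTheory GRing.Theory Num.Theory.
Import numFieldNormedType.Exports.
Local Open Scope classical_set_scope.
Local Open Scope ring_scope.

(* The finite-dimensional real vector space V is modelled as 'rV[R]_n
   (every n-dimensional real vector space is isomorphic to it).  Linear
   forms on 'rV[R]_n are represented by their coordinate vectors, also in
   'rV[R]_n, via the pairing below. *)
Definition pairing (R : realType) (n : nat) (eta v : 'rV[R]_n) : R :=
  \sum_(i < n) eta ord0 i * v ord0 i.

Definition seminorm (R : realType) (n : nat) (N : 'rV[R]_n -> R) : Prop :=
  (forall u v, N (u + v) <= N u + N v) /\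
  (forall (a : R) v, N (a *: v) = `|a| * N v).

Definition dual_seminorm (R : realType) (n : nat) (N : 'rV[R]_n -> R)
    (eta : 'rV[R]_n) : \bar R :=
  ereal_sup [set (pairing eta v)%:E | v in [set v | N v <= 1]].

Definition dual_space (R : realType) (n : nat) (N : 'rV[R]_n -> R)
    : set 'rV[R]_n :=
  [set eta | (dual_seminorm N eta < +oo)%E].

Definition borel_forms (R : realType) (n : nat) :=
  g_sigma_algebraType (@open 'rV[R]_n).

Definition locally_finite (R : realType) (n : nat)
    (sigma : set (borel_forms R n) -> \bar R) : Prop :=
  forall eta : 'rV[R]_n, exists U : set 'rV[R]_n,
    [/\ open U, U eta & (sigma U < +oo)%E].

Definition zonal_representation (R : realType) (n : nat)
    (N : 'rV[R]_n -> R) (sigma : {measure set (borel_forms R n) -> \bar R}) :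
    Prop :=
  [/\ locally_finite sigma,
      (\int[sigma]_(eta in dual_space N) dual_seminorm N eta < +oo)%E &
      forall v : 'rV[R]_n,
        (N v)%:E = (\int[sigma]_(eta in dual_space N) `|pairing eta v|%:E)%E].

Definition vector_measure (d : measure_display) (X : measurableType d)
    (R : realType) (n : nat) (mu : set X -> 'rV[R]_n) : Prop :=
  forall F : nat -> set X, (forall i, measurable (F i)) -> trivIset setT F ->
    (fun k => \sum_(i < k) mu (F i)) @ \oo --> mu (\bigcup_i F i).

Definition vtotal_variation (d : measure_display) (X : measurableType d)
    (R : realType) (T : Type) (nu : T -> R) (m : set X -> T) (A : set X)
    : \bar R :=
  ereal_sup [set x | exists (k : nat) (E : 'I_k -> set X),
    [/\ forall i, measurable (E i) /\ E i `<=` A,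
        forall i j, i != j -> E i `&` E j = set0 &
        x = (\sum_(i < k) nu (m (E i)))%:E]].

From HB Require Import structures.
From mathcomp Require Import all_boot all_order all_algebra.
From mathcomp Require Import all_classical all_reals all_analysis.
From mathcomp Require Import measurable_realfun.
Import Order.TTheory GRing.Theory Num.Theory.
Import numFieldNormedType.Exports.
Local Open Scope classical_set_scope.
Local Open Scope ring_scope.

(* For every [eta], the real measure [E |-> pairing eta (mu E)] has a Hahn set
   [P], and every partition sum of its total variation over [A] is bounded by
   the sum over the two pieces [A `&` P] and [A `\` P]. Fix Hahn sets [H m] for a
   dense sequence of forms and let [g_N eta] be the partition sum of
   [|pairing eta (mu _)|] over the cells of [A] cut out by [H 0, ..., H N.-1].
   Partition sums are Lipschitz in [eta], uniformly over partitions, so [g_N eta]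
   increases to the total variation of [pairing eta \o mu] on [A]. Each [g_N] is
   continuous, hence Borel, and the zonal identity turns its integral into
   [\sum_cells |mu cell|_V <= |mu|_V(A)]; monotone convergence then gives one
   inequality. Conversely, for any partition, the zonal identity writes
   [\sum_i |mu (E i)|_V] as the integral of a partition sum of each
   [pairing eta \o mu], which is at most its total variation. *)

Section pairing.
Context {R : realType} {n : nat}.
Implicit Types eta u v : 'rV[R]_n.

Lemma pairingC eta v : pairing eta v = pairing v eta.
Proof. by apply: eq_bigr => i _; rewrite mulrC. Qed.

Lemma pairing0r eta : pairing eta 0 = 0.
Proof. by rewrite /pairing big1 // => i _; rewrite mxE mulr0. Qed.

Lemma pairingDr eta u v : pairing eta (u + v) = pairing eta u + pairing eta v.
Proof. by rewrite /pairing -big_split; apply: eq_bigr => i _; rewrite mxE mulrDr. Qed.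

Lemma pairingDl eta u v : pairing (u + v) eta = pairing u eta + pairing v eta.
Proof. by rewrite pairingC pairingDr -!(pairingC eta). Qed.

Lemma pairing_sumr (I : Type) (r : seq I) (P : pred I) (w : I -> 'rV[R]_n) eta :
  pairing eta (\sum_(i <- r | P i) w i) = \sum_(i <- r | P i) pairing eta (w i).
Proof.
rewrite /pairing; under eq_bigr do rewrite summxE mulr_sumr.
by rewrite exchange_big.
Qed.

Lemma pairing_delta_mx (j : 'I_n) v : pairing (delta_mx ord0 j) v = v ord0 j.
Proof.
rewrite /pairing (bigD1 j) //= big1 ?addr0 => [|i ij]; first by rewrite mxE !eqxx mul1r.
by rewrite mxE eqxx (negbTE ij) mul0r.
Qed.

Lemma continuous_pairing v : continuous (fun eta => pairing eta v).
Proof.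
apply: (@continuous_big _ _ +%R 0 xpredT add_continuous) => i _ eta.
apply: (@continuousM _ _ (fun x : 'rV[R]_n => x ord0 i) (fun=> v ord0 i)).
  exact: coord_continuous.
exact: cst_continuous.
Qed.

Lemma continuous_abs_pairing v : continuous (fun eta => `|pairing eta v|).
Proof.
move=> eta; apply: (@continuous_comp _ _ _ (fun eta => pairing eta v) Num.norm).
  exact: continuous_pairing.
exact: norm_continuous.
Qed.

Lemma continuous_pairingr eta : continuous (pairing eta).
Proof.
have -> : pairing eta = fun v => pairing v eta by apply/funext => v; exact: pairingC.
exact: continuous_pairing.
Qed.

End pairing.

Section borel_forms.
Context {R : realType} {n : nat}.
Local Notation B := (borel_forms R n).

Lemma measurable_open_forms (U : set 'rV[R]_n) : open U -> measurable (U : set B).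
Proof. exact: sub_sigma_algebra. Qed.

Lemma continuous_measurable_forms (f : 'rV[R]_n -> R) :
  continuous f -> measurable_fun setT (f : B -> R).
Proof.
move=> cf; apply: (measurability _ (RGenOpens.measurableE R)).
move=> _ [_ [a [b ->]] <-]; rewrite setTI; apply: measurable_open_forms.
by move/continuousP: cf; apply; exact: interval_open.
Qed.

Lemma measurable_dual_space (N : 'rV[R]_n -> R) : measurable (dual_space N : set B).
Proof.
pose U (M : nat) := \bigcup_(v in [set v | N v <= 1])
  [set eta : 'rV[R]_n | M%:R < pairing eta v].
have oU M : open (U M).
  apply: bigcup_open => v _.
  rewrite (_ : [set eta | _ < _] = (fun eta => pairing eta v) @^-1` `]M%:R, +oo[).
    by move/continuousP: (continuous_pairing v); apply; exact: interval_open.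
  by apply/seteqP; split => x /=; rewrite in_itv /= andbT.
suff -> : dual_space N = \bigcup_(M : nat) ~` U M.
  apply: bigcupT_measurable => M; apply: measurableC.
  exact: measurable_open_forms (oU M).
apply/seteqP; split => eta.
- rewrite /dual_space /=; set s := dual_seminorm N eta => s_lt.
  have [M sM] : exists M : nat, (s <= M%:R%:E)%E.
    move: s_lt; case: s => [r| |] // _; last by exists 0%N; rewrite leNye.
    exists (Num.Def.archi_bound `|r|); rewrite lee_fin.
    exact: le_trans (ler_norm r) (ltW (archi_boundP (normr_ge0 r))).
  exists M => // -[v Nv Mv].
  have : ((pairing eta v)%:E <= s)%E by apply: ereal_sup_ubound; exists v.
  by move=> /le_trans /(_ sM); rewrite lee_fin leNgt Mv.
- move=> [M _ UM]; apply: (@le_lt_trans _ _ M%:R%:E); last exact: ltry.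
  apply: ge_ereal_sup => _ [v Nv <-]; rewrite lee_fin leNgt.
  by apply/negP => Mv; apply: UM; exists v.
Qed.

End borel_forms.

Section rat_row.
Context {R : realType} {n : nat}.

Definition rat_row (m : nat) : 'rV[R]_n :=
  if @unpickle 'rV[rat]_n m is Some r then map_mx ratr r else 0.

Lemma rat_row_dense (eta : 'rV[R]_n) {e : R} : 0 < e ->
  exists m, forall j, `|eta ord0 j - rat_row m ord0 j| < e.
Proof.
move=> e0; have near_rat j : exists r : rat, `|eta ord0 j - ratr r| < e.
  have lt_itv : eta ord0 j - e < eta ord0 j + e by rewrite ltrD2l gtrN.
  have [r] := rat_in_itvoo lt_itv.
  by rewrite in_itv /= -ltr_distlC; exists r.
have [f fP] := choice near_rat.
by exists (pickle (\row_j f j : 'rV[rat]_n)) => j; rewrite /rat_row pickleK !mxE.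
Qed.

End rat_row.

Section cells.
Context {d : measure_display} {X : measurableType d}.
Implicit Types (A : set X) (H : nat -> set X).

Definition subpartition A {I : finType} (C : I -> set X) : Prop :=
  (forall i, measurable (C i) /\ C i `<=` A) /\
  (forall i j, i != j -> C i `&` C j = set0).

Lemma sum_le_vtotal_variation (R : realType) (T : Type) (f : T -> R)
    (m : set X -> T) A (I : finType) (C : I -> set X) :
  subpartition A C -> ((\sum_i f (m (C i)))%:E <= vtotal_variation f m A)%E.
Proof.
move=> [CA dC]; apply: ereal_sup_ubound.
exists #|I|, (fun i => C (enum_val i)); split => // [i j ij|].
  by apply: dC; apply: contra ij => /eqP/enum_val_inj ->.
congr EFin; rewrite (reindex (@enum_val I predT)) //.
by exists enum_rank => i _; [exact: enum_valK | exact: enum_rankK].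
Qed.

Definition cell A H N (b : {ffun 'I_N -> bool}) : set X :=
  [set x | A x /\ forall i : 'I_N, (x \in H i) = b i].

Definition cell_index H N (x : X) : {ffun 'I_N -> bool} := [ffun i : 'I_N => x \in H i].

Lemma cell_index_mem A H N x : A x -> cell A H N (cell_index H N x) x.
Proof. by move=> Ax; split => // i; rewrite ffunE. Qed.

Lemma mem_set_if (P : set X) x (b : bool) :
  (x \in P) = b <-> (if b then P else ~` P) x.
Proof.
case: b => /=; first by split => [/set_mem | /mem_set ->].
by split => [/negbT/negP xP /mem_set | xP]; last apply/negbTE/negP => /set_mem.
Qed.

Lemma cell_subpartition A H N : measurable A -> (forall i, measurable (H i)) ->
  subpartition A (cell A H N).
Proof.
move=> mA mH; split => [b|b b' bb'].
  split; last by move=> x [].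
  rewrite (_ : cell A H N b =
      A `&` \bigcap_(i in [set: 'I_N]) if b i then H i else ~` H i).
    apply: measurableI => //; apply: fin_bigcap_measurable => [|i _].
      exact: finite_finset.
    by case: (b i) => //; exact: measurableC.
  apply/seteqP; split => x [Ax xH]; split => // i; first by move=> _; apply/mem_set_if.
  by apply/mem_set_if; exact: xH.
apply/seteqP; split => x // [[_ xb] [_ xb']].
by apply: (negP bb'); apply/eqP/ffunP => i; rewrite -xb -xb'.
Qed.

Definition ffun_init {N} (b : {ffun 'I_N.+1 -> bool}) : {ffun 'I_N -> bool} :=
  [ffun i : 'I_N => b (widen_ord (leqnSn N) i)].

Lemma cell_bigcup_succ A H N (b : {ffun 'I_N -> bool}) :
  cell A H N b =
  \bigcup_(b' in [set b' : {ffun 'I_N.+1 -> bool} | ffun_init b' == b])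
    cell A H N.+1 b'.
Proof.
apply/seteqP; split => x.
  move=> [Ax xb]; exists (cell_index H N.+1 x); last exact: cell_index_mem.
  by apply/eqP/ffunP => i; rewrite !ffunE -xb.
by move=> [b' /eqP <- [Ax xb']]; split => // i; rewrite ffunE -xb'.
Qed.

Lemma cell_bigcup_bit A H {N m : nat} (ltmN : (m < N)%N) (j : bool) :
  A `&` (if j then H m else ~` H m) =
  \bigcup_(b in [set b : {ffun 'I_N -> bool} | b (Ordinal ltmN) == j]) cell A H N b.
Proof.
apply/seteqP; split => x.
  move=> [Ax Hx]; exists (cell_index H N x); last exact: cell_index_mem.
  by apply/eqP; rewrite ffunE /=; apply/mem_set_if.
by move=> [b /eqP <- [Ax xb]]; split => //; move: (xb (Ordinal ltmN)) => /mem_set_if.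
Qed.

End cells.

Section vector_measure.
Context {R : realType} {n : nat} {d : measure_display} {X : measurableType d}.
Variable mu : set X -> 'rV[R]_n.
Hypothesis mu_vm : vector_measure mu.

Lemma vector_measure0 : mu set0 = 0.
Proof.
have tr0 : trivIset setT (fun _ : nat => @set0 X) by move=> i j _ _ [x []].
have := @mu_vm _ (fun=> measurable0) tr0; rewrite bigcup0 // => mu_cvg.
have : (fun k => \sum_(i < k.+1) mu set0 - \sum_(i < k) mu set0) @ \oo -->
    mu set0 - mu set0.
  by apply: cvgB => //; rewrite (cvg_shiftS (fun k => \sum_(i < k) mu set0)).
under eq_fun do rewrite big_ord_recr /= addrAC subrr add0r.
by rewrite subrr => /cvg_lim <-; rewrite ?lim_cst.
Qed.

Lemma vector_measureU {B C : set X} : measurable B -> measurable C ->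
  B `&` C = set0 -> mu (B `|` C) = mu B + mu C.
Proof.
move=> mB mC BC0; pose F i := if i == 0%N then B else if i == 1%N then C else set0.
have mF i : measurable (F i) by rewrite /F; case: ifP => // _; case: ifP.
have tF : trivIset setT F.
  move=> i j _ _ [x [Fi Fj]]; move: Fi Fj; rewrite /F.
  have BCx : B x -> C x -> False.
    by move=> Bx Cx; suff : (B `&` C) x by rewrite BC0.
  case: i => [|[|i]]; case: j => [|[|j]] //= Fi Fj.
  - by case: (BCx Fi Fj).
  - by case: (BCx Fj Fi).
have UF : \bigcup_i F i = B `|` C.
  apply/seteqP; split => x; last by case=> [Bx|Cx]; [exists 0%N | exists 1%N].
  by case=> -[|[|i]] _; rewrite /F /=; [left | right | case].
have := @mu_vm _ mF tF; rewrite UF => /cvg_lim <- //.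
apply: lim_near_cst => //; near=> k.
have k2 : (2 <= k)%N by near: k; exists 2%N.
rewrite -(subnKC k2) big_split_ord /= !big_ord_recl big_ord0 addr0 /=.
by rewrite big1 ?addr0 // => i _; exact: vector_measure0.
Unshelve. all: by end_near.
Qed.

Lemma vector_measure_bigcup {I : finType} (P : pred I) {F : I -> set X} :
  (forall i, measurable (F i)) -> (forall i j, i != j -> F i `&` F j = set0) ->
  mu (\bigcup_(i in [set i | P i]) F i) = \sum_(i | P i) mu (F i).
Proof.
move=> mF dF; rewrite -big_filter.
have -> : [set i | P i] = [set i | i \in [seq i <- index_enum I | P i]].
  by apply/seteqP; split => i; rewrite /= mem_filter mem_index_enum andbT.
elim: [seq _ <- _ | _] (filter_uniq P (index_enum_uniq I)) => [_|a r IH].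
  rewrite big_nil -vector_measure0; congr mu.
  by apply/seteqP; split => x // [].
move=> /andP[ar ur]; rewrite big_cons -IH // -vector_measureU //.
- congr mu; apply/seteqP; split => x.
    by move=> [i]; rewrite /= inE => /orP[/eqP -> | ir] Fx; [left | right; exists i].
  move=> [Fx | [i ir Fx]]; first by exists a; rewrite /= ?inE ?eqxx.
  by exists i; rewrite /= ?inE ?ir ?orbT.
- exact: fin_bigcup_measurable finite_finset _.
- apply/seteqP; split => x // [Fax [i ir Fix]].
  have ai : a != i by apply: contraNneq ar => ->.
  by move: (dF _ _ ai); rewrite -subset0 => /(_ x); apply.
Qed.

Lemma vector_measure_setD {E F : set X} : measurable E -> measurable F ->
  E `<=` F -> mu F = mu E + mu (F `\` E).
Proof.
by move=> mE mF EF; rewrite -vector_measureU ?setDUK ?setDIK //; exact: measurableD.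
Qed.


Definition pairing_charge eta : set X -> \bar R := fun E => (pairing eta (mu E))%:E.

Let pairing_charge0 eta : pairing_charge eta set0 = 0%E.
Proof. by rewrite /pairing_charge vector_measure0 pairing0r. Qed.

Let pairing_charge_fin eta E : measurable E -> pairing_charge eta E \is a fin_num.
Proof. by []. Qed.

Let pairing_charge_sigma_additive eta : semi_sigma_additive (pairing_charge eta).
Proof.
move=> F mF tF _; rewrite /pairing_charge.
have pairing_cvg : pairing eta (\sum_(i < k) mu (F i)) @[k --> \oo] -->
    pairing eta (mu (\bigcup_k F k)).
  exact: cvg_comp _ _ (@mu_vm F mF tF) (continuous_pairingr eta _).
under eq_fun do rewrite sumEFin big_mkord -pairing_sumr.
by apply: cvg_EFin; [exact: nearW | exact: pairing_cvg].
Qed.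

HB.instance Definition _ eta := isCharge.Build d X R (pairing_charge eta)
  (pairing_charge0 eta) (@pairing_charge_fin eta) (pairing_charge_sigma_additive eta).

Lemma pairing_hahn eta : exists P : set X, [/\ measurable P,
  forall E, measurable E -> E `<=` P -> 0 <= pairing eta (mu E) &
  forall E, measurable E -> E `<=` ~` P -> pairing eta (mu E) <= 0].
Proof.
have [P [N [[mP P_ge0] [mN N_le0] PN _]]] := Hahn_decomposition (pairing_charge eta).
exists P; split => // E mE EP; rewrite -lee_fin.
apply: N_le0 => // x Ex; have : (P `|` N) x by rewrite PN.
by case => // /EP.
Qed.

Definition hahn_set eta : set X := projT1 (cid (pairing_hahn eta)).

Lemma hahn_setP eta : [/\ measurable (hahn_set eta),
  forall E, measurable E -> E `<=` hahn_set eta -> 0 <= pairing eta (mu E) &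
  forall E, measurable E -> E `<=` ~` hahn_set eta -> pairing eta (mu E) <= 0].
Proof. exact: projT2 (cid (pairing_hahn eta)). Qed.


Lemma hahn_set_pairing_le eta {E F : set X} : measurable E -> measurable F ->
  E `<=` F -> F `<=` hahn_set eta -> pairing eta (mu E) <= pairing eta (mu F).
Proof.
move=> mE mF EF FP; have [_ P_ge0 _] := hahn_setP eta.
rewrite (vector_measure_setD mE mF EF) pairingDr lerDl.
by apply: P_ge0; [exact: measurableD | move=> x [/FP]].
Qed.

Lemma hahn_set_pairing_ge eta {E F : set X} : measurable E -> measurable F ->
  E `<=` F -> F `<=` ~` hahn_set eta -> pairing eta (mu F) <= pairing eta (mu E).
Proof.
move=> mE mF EF FP; have [_ _ P_le0] := hahn_setP eta.
rewrite (vector_measure_setD mE mF EF) pairingDr gerDl.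
by apply: P_le0; [exact: measurableD | move=> x [/FP]].
Qed.

Lemma abs_pairing_le_hahn eta {E : set X} : measurable E ->
  `|pairing eta (mu E)| <=
    pairing eta (mu (E `&` hahn_set eta)) - pairing eta (mu (E `\` hahn_set eta)).
Proof.
move=> mE; have [mP P_ge0 P_le0] := hahn_setP eta.
have mEP : measurable (E `&` hahn_set eta) by exact: measurableI.
have EP_ge0 : 0 <= pairing eta (mu (E `&` hahn_set eta)).
  by apply: P_ge0 => // x [].
have EnP_le0 : pairing eta (mu (E `\` hahn_set eta)) <= 0.
  by apply: P_le0 => [|x []//]; exact: measurableD.
rewrite (vector_measure_setD mEP mE (@subIsetl _ _ _)) setDIr setDv set0U.
by rewrite pairingDr (le_trans (ler_normD _ _)) // ger0_norm // ler0_norm.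
Qed.

Definition abs_pairing_sum {I : finType} (C : I -> set X) eta : R :=
  \sum_i `|pairing eta (mu (C i))|.

Lemma abs_pairing_sum_ge0 (I : finType) (C : I -> set X) eta :
  0 <= abs_pairing_sum C eta.
Proof. exact: sumr_ge0. Qed.

Lemma abs_pairing_sumDl (I : finType) (C : I -> set X) eta eta' :
  abs_pairing_sum C (eta + eta') <= abs_pairing_sum C eta + abs_pairing_sum C eta'.
Proof.
by rewrite -big_split; apply: ler_sum => i _; rewrite pairingDl ler_normD.
Qed.

Lemma abs_pairing_sum_le_coord (I : finType) (C : I -> set X) eta :
  abs_pairing_sum C eta <= \sum_j `|eta ord0 j| * abs_pairing_sum C (delta_mx ord0 j).
Proof.
under [X in _ <= X]eq_bigr do rewrite mulr_sumr.
rewrite exchange_big /=; apply: ler_sum => i _.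
under [X in _ <= X]eq_bigr do rewrite pairing_delta_mx -normrM.
exact: ler_norm_sum.
Qed.

Lemma abs_pairing_sum_coarsen (I J : finType) (C : I -> set X) (D : J -> set X)
    (f : I -> J) eta :
  (forall i, measurable (C i)) -> (forall i i', i != i' -> C i `&` C i' = set0) ->
  (forall j, D j = \bigcup_(i in [set i | f i == j]) C i) ->
  abs_pairing_sum D eta <= abs_pairing_sum C eta.
Proof.
move=> mC dC DE; rewrite /abs_pairing_sum (partition_big f predT) //=.
apply: ler_sum => j _; rewrite DE vector_measure_bigcup // pairing_sumr.
exact: ler_norm_sum.
Qed.

Lemma abs_pairing_sum_le_hahn {A : set X} {I : finType} {C : I -> set X} eta :
  measurable A -> subpartition A C ->
  abs_pairing_sum C eta <= `|pairing eta (mu (A `&` hahn_set eta))| +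
                           `|pairing eta (mu (A `\` hahn_set eta))|.
Proof.
move=> mA [CA dC]; rewrite /abs_pairing_sum.
have [mP _ _] := hahn_setP eta; set P := hahn_set eta.
have mC i : measurable (C i) by case: (CA i).
have dsub (D : I -> set X) : (forall i, D i `<=` C i) ->
    forall i j, i != j -> D i `&` D j = set0.
  move=> DC i j ij; apply/seteqP; split => x // [/DC Cix /DC Cjx].
  by rewrite -(dC i j ij); split.
have mCP i : measurable (C i `&` P) by exact: measurableI.
have mCnP i : measurable (C i `\` P) by exact: measurableD.
have munion (D : I -> set X) : (forall i, measurable (D i)) ->
    measurable (\bigcup_(i in [set i | xpredT i]) D i).
  by move=> mD; apply: fin_bigcup_measurable => //; exact: finite_finset.
apply: (le_trans (ler_sum _ (fun i _ => abs_pairing_le_hahn eta (mC i)))) => /=.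
rewrite sumrB -!pairing_sumr.
have dCP := dsub _ (fun i => @subIsetl _ (C i) P).
have dCnP := dsub _ (fun i => @subDsetl _ (C i) P).
rewrite -(vector_measure_bigcup xpredT mCP dCP) -(vector_measure_bigcup xpredT mCnP dCnP).
have le_AP : pairing eta (mu (\bigcup_(i in [set i | xpredT i]) (C i `&` P))) <=
    pairing eta (mu (A `&` P)).
  apply: hahn_set_pairing_le; [exact: munion | exact: measurableI | | by move=> x []].
  by move=> x [i _ [Cix Px]]; split => //; case: (CA i) => _; apply.
have ge_AnP : pairing eta (mu (A `\` P)) <=
    pairing eta (mu (\bigcup_(i in [set i | xpredT i]) (C i `\` P))).
  apply: hahn_set_pairing_ge; [exact: munion | exact: measurableD | | by move=> x []].
  by move=> x [i _ [Cix Px]]; split => //; case: (CA i) => _; apply.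
apply: (le_trans (lerB le_AP ge_AnP)).
by rewrite lerD ?ler_norm // -normrN ler_norm.
Qed.

Lemma continuous_abs_pairing_sum (I : finType) (C : I -> set X) :
  continuous (abs_pairing_sum C).
Proof.
apply: (@continuous_big _ _ +%R 0 xpredT add_continuous) => i _.
exact: continuous_abs_pairing.
Qed.

Lemma measurable_abs_pairing_sum (I : finType) (C : I -> set X) :
  measurable_fun setT (fun eta : borel_forms R n => (abs_pairing_sum C eta)%:E).
Proof.
apply/measurable_EFinP; apply: continuous_measurable_forms.
exact: continuous_abs_pairing_sum.
Qed.

Section hahn_cells.
Variable A : set X.
Hypothesis mA : measurable A.

Definition hahn_cells N := cell A (fun m => hahn_set (rat_row m)) N.

Lemma hahn_cells_subpartition N : subpartition A (hahn_cells N).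
Proof. by apply: cell_subpartition => // m; case: (hahn_setP (rat_row m)). Qed.

Lemma abs_pairing_sum_hahn_cells_nondecreasing eta :
  nondecreasing_seq (fun N => abs_pairing_sum (hahn_cells N) eta).
Proof.
apply/nondecreasing_seqP => N; have cells := hahn_cells_subpartition N.+1.
apply: (@abs_pairing_sum_coarsen _ _ _ _ ffun_init) => [b||b].
- by case: (cells.1 b).
- exact: cells.2.
- exact: cell_bigcup_succ.
Qed.

Lemma abs_pairing_sum_lipschitz : exists2 K, 0 <= K &
  forall (I : finType) (C : I -> set X) (eta eta' : 'rV[R]_n) (c : R),
    subpartition A C ->
    (forall j, `|eta ord0 j - eta' ord0 j| <= c) ->
    abs_pairing_sum C eta <= abs_pairing_sum C eta' + c * K.
Proof.
pose e j : 'rV[R]_n := delta_mx ord0 j.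
pose t j := `|pairing (e j) (mu (A `&` hahn_set (e j)))| +
            `|pairing (e j) (mu (A `\` hahn_set (e j)))|.
exists (\sum_j t j); first by apply: sumr_ge0 => j _; rewrite addr_ge0.
move=> I C eta eta' c AC close; rewrite -{1}(subrK eta' eta) addrC.
apply: (le_trans (abs_pairing_sumDl _ _ _ _)); rewrite lerD2l.
apply: (le_trans (abs_pairing_sum_le_coord _ _ _)); rewrite mulr_sumr.
apply: ler_sum => j _; apply: ler_pM => //; first exact: abs_pairing_sum_ge0.
- by rewrite !mxE.
- exact: abs_pairing_sum_le_hahn.
Qed.

Lemma hahn_cells_approx eta {e : R} : 0 < e -> exists N,
  forall (I : finType) (C : I -> set X), subpartition A C ->
    abs_pairing_sum C eta <= abs_pairing_sum (hahn_cells N) eta + e.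
Proof.
move=> e0; have [K K0 lipschitz] := abs_pairing_sum_lipschitz.
have K1 : 0 < 2 * K + 1 by rewrite ltr_wpDl // mulr_ge0.
pose e' := e / (2 * K + 1); have e'0 : 0 < e' by rewrite divr_gt0.
have [m close] := rat_row_dense eta e'0; set q := rat_row m in close.
exists m.+1 => I C AC; have cells := hahn_cells_subpartition m.+1.
have eta_q : abs_pairing_sum C eta <= abs_pairing_sum C q + e' * K.
  by apply: lipschitz => // j; exact: ltW.
have q_eta : abs_pairing_sum (hahn_cells m.+1) q <=
    abs_pairing_sum (hahn_cells m.+1) eta + e' * K.
  by apply: lipschitz => // j; rewrite distrC ltW.
(* The level-[m.+1] cells refine the Hahn split of [A] for [q], and that split
   dominates every partition sum for [q]. *)
have q_cells : abs_pairing_sum C q <= abs_pairing_sum (hahn_cells m.+1) q.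
  apply: (le_trans (abs_pairing_sum_le_hahn q mA AC)).
  have := @abs_pairing_sum_coarsen _ bool (hahn_cells m.+1)
    (fun j => A `&` (if j then hahn_set q else ~` hahn_set q)) (fun b => b ord_max) q.
  rewrite /abs_pairing_sum big_bool /=; apply => [b||j].
  - by case: (cells.1 b).
  - exact: cells.2.
  - exact: (cell_bigcup_bit A (fun m => hahn_set (rat_row m)) (ltnSn m) j).
have twice : e' * K + e' * K <= e.
  have -> : e' * K + e' * K = e' * (2 * K) by rewrite -mulrDr mulr_natl mulr2n.
  have -> : e = e' * (2 * K + 1) by rewrite /e' divfK // gt_eqF.
  by rewrite ler_wpM2l ?(ltW e'0) // lerDl.
apply: (le_trans eta_q); apply: (le_trans (lerD (le_trans q_cells q_eta) (lexx _))).
by rewrite -addrA lerD2l.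
Qed.

Definition pairing_variation eta :=
  vtotal_variation (fun r : R => `|r|) (fun E => pairing eta (mu E)) A.

Lemma pairing_variation_cvg eta :
  (abs_pairing_sum (hahn_cells N) eta)%:E @[N --> \oo] --> pairing_variation eta.
Proof.
set g := fun N => _.
have g_nd : {homo g : N N' / (N <= N')%N >-> (N <= N')%E}.
  by move=> N N' NN'; rewrite lee_fin; exact: abs_pairing_sum_hahn_cells_nondecreasing.
suff -> : pairing_variation eta = ereal_sup (range g) by exact: ereal_nondecreasing_cvgn.
apply/eqP; rewrite eq_le; apply/andP; split.
- apply: ge_ereal_sup => _ [k [E [EA dE ->]]]; apply/lee_addgt0Pr => e e0.
  have [N approxN] := hahn_cells_approx eta e0.
  apply: (@le_trans _ _ (g N + e%:E)); first by rewrite -EFinD lee_fin approxN.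
  by rewrite leeD2r //; apply: ereal_sup_ubound; exists N.
- apply: ge_ereal_sup => _ [N _ <-].
  exact: sum_le_vtotal_variation (hahn_cells_subpartition N).
Qed.

Lemma measurable_pairing_variation :
  measurable_fun setT (pairing_variation : borel_forms R n -> \bar R).
Proof.
apply: (@emeasurable_fun_cvg _ (borel_forms R n) R setT
  (fun N eta => (abs_pairing_sum (hahn_cells N) eta)%:E)).
  by move=> N; exact: measurable_abs_pairing_sum.
by move=> eta _; exact: pairing_variation_cvg.
Qed.

Section zonal.
Variable nrm : 'rV[R]_n -> R.
Variable sigma : {measure set (borel_forms R n) -> \bar R}.
Hypothesis sigma_zonal : forall v : 'rV[R]_n,
  (nrm v)%:E = (\int[sigma]_(eta in dual_space nrm) `|pairing eta v|%:E)%E.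

Lemma integral_abs_pairing_sum (I : finType) (C : I -> set X) :
  (\int[sigma]_(eta in dual_space nrm) (abs_pairing_sum C eta)%:E =
   (\sum_i nrm (mu (C i)))%:E)%E.
Proof.
rewrite -sumEFin; under eq_integral do rewrite /abs_pairing_sum -sumEFin.
rewrite ge0_integral_sum => [||i|i eta _]; last by rewrite lee_fin.
- by apply: eq_bigr => i _; rewrite sigma_zonal.
- exact: measurable_dual_space.
apply/measurable_EFinP; apply: measurable_funTS; apply: continuous_measurable_forms.
exact: continuous_abs_pairing.
Qed.

Lemma vtotal_variation_le_integral :
  (vtotal_variation nrm mu A <=
   \int[sigma]_(eta in dual_space nrm) pairing_variation eta)%E.
Proof.
apply: ge_ereal_sup => _ [k [E [EA dE ->]]].
rewrite -integral_abs_pairing_sum; apply: ge0_le_integral.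
- exact: measurable_dual_space.
- by move=> eta _; rewrite lee_fin abs_pairing_sum_ge0.
- by apply: measurable_funTS; exact: measurable_abs_pairing_sum.
- by apply: measurable_funTS; exact: measurable_pairing_variation.
- by move=> eta _; exact: sum_le_vtotal_variation (conj EA dE).
Qed.

Lemma integral_le_vtotal_variation :
  (\int[sigma]_(eta in dual_space nrm) pairing_variation eta <=
   vtotal_variation nrm mu A)%E.
Proof.
have mD := measurable_dual_space nrm.
pose g N eta := (abs_pairing_sum (hahn_cells N) eta)%:E.
have mg (N : nat) : measurable_fun (dual_space nrm : set (borel_forms R n)) (g N).
  by apply: measurable_funTS; exact: measurable_abs_pairing_sum.
have g_ge0 N eta : dual_space nrm eta -> (0 <= g N eta)%E.
  by rewrite lee_fin abs_pairing_sum_ge0.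
have g_nd eta : {homo g^~ eta : N N' / (N <= N')%N >-> (N <= N')%E}.
  by move=> N N' NN'; rewrite lee_fin abs_pairing_sum_hahn_cells_nondecreasing.
rewrite (eq_integral (fun eta : borel_forms R n => limn (g^~ eta))); last first.
  by move=> eta _; apply/esym/cvg_lim => //; exact: pairing_variation_cvg.
rewrite monotone_convergence //; apply: lime_le.
  apply: ereal_nondecreasing_is_cvgn => N N' NN'.
  by apply: ge0_le_integral => // [eta Deta|eta _]; [exact: g_ge0 | exact: g_nd NN'].
apply: nearW => N; rewrite integral_abs_pairing_sum.
exact: sum_le_vtotal_variation (hahn_cells_subpartition N).
Qed.

End zonal.

End hahn_cells.

End vector_measure.

Theorem lemma4p2 (R : realType) (n : nat) (nrm : 'rV[R]_n -> R)
    (sigma : {measure set (borel_forms R n) -> \bar R}) :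
  seminorm nrm -> zonal_representation nrm sigma ->
  forall (d : measure_display) (X : measurableType d)
    (mu : set X -> 'rV[R]_n) (A : set X),
  vector_measure mu -> measurable A ->
  vtotal_variation nrm mu A =
  (\int[sigma]_(eta in dual_space nrm)
     vtotal_variation (fun r : R => `|r|%R) (fun E => pairing eta (mu E)) A)%E.
Proof.
move=> _ [_ _ sigma_zonal] d X mu A mu_vm mA.
apply/eqP; rewrite eq_le; apply/andP; split.
- exact: vtotal_variation_le_integral.
- exact: integral_le_vtotal_variation.
Qed.
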